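(* Let $V$ be the set of integer points $(x,y,z)\in\mathbb{Z}^3$ such that none of $x\pm y,\ y\pm z,\ z\pm x$ is congruent to $0\pmod 4$, and let $G$ be the graph on $V$ with two vertices adjacent exactly when their Euclidean distance is $\sqrt2$. Define $h:V\to\mathbb{R}$ as follows. For $P=(x,y,z)\in V$ let $x'\ge y'\ge z'\ge 0$ be $|x|,|y|,|z|$ sorted in decreasing order, and put $h'(P)=x'+\tfrac{y'}{2}-\tfrac{s}{2}$ with $s=a(y' \bmod 4)\cdot b(x' \bmod 4)$, where $(a(0),\dots,a(3))=(0,1,0,-1)$ and $(b(0),\dots,b(3))=(1,0,-1,0)$. Then $h(P)=h'(P)+c(P)$, where ($\operatorname{sig}$ = sign function): $c(P)=0$ if $|x|\ge|y|\ge|z|$; $c(P)=-\operatorname{sig}(z)$ if $|x|\ge|z|\ge|y|$; $c(P)=-\operatorname{sig}(y)$ if $|y|\ge|x|\ge|z|$; $c(P)=0$ if $|y|\ge|z|\ge|x|$ and $yz\le0$; $c(P)=-2\operatorname{sig}(z)$ if $|y|\ge|z|\ge|x|$ and $yz\ge0$; $c(P)=-2\operatorname{sig}(z)$ if $|z|\ge|x|\ge|y|$; $c(P)=-\operatorname{sig}(z)$ if $|z|\ge|y|\ge|x|$ and $yz\le0$; $c(P)=-3\operatorname{sig}(y)$ if $|z|\ge|y|\ge|x|$ and $yz\ge0$. Let $T_3(P)=P+(2,2,2)$, $T_4(P)=P+(4,0,0)$, $T_6(P)=P+(4,4,0)$ with associated regions $Q_3=\{x+y\ge0,\ y+z\ge0,\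 z+x\ge0\}$, $Q_4=\{x\ge|y|,\ x\ge|z|\}$, $Q_6=\{y\ge|z|,\ x\ge y+|z|\}$, and let $\mathcal U=\{(x,y,z): x\ge y\ge z\ge0\}$. If $P\in V\cap\mathcal U$ and $h(P)\ge 15$, then there is $k\in\{3,4,6\}$ such that $P$, all neighbours of $P$ in $G$, and the images of $P$ and of all these neighbours under $T_k^{-1}$ all lie in $Q_k$.
   Context: $G$ is the sodalite network (edge-skeleton of the tiling of 3-space by truncated octahedra, scaled by 4); each vertex has four neighbours, whose coordinates differ from those of the vertex by $-1,0,+1$ in each component. For vertices the values $|x|,|y|,|z|$ are pairwise distinct, so exactly one case in the definition of $c(P)$ applies. *)

From Stdlib Require Import ZArith Reals Lra Lia Bool.
Open Scope Z_scope.

Definition point := (Z * Z * Z)%type.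

Definition inV (P : point) : Prop :=
  let '(x, y, z) := P in
  (x + y) mod 4 <> 0 /\ (x - y) mod 4 <> 0 /\
  (y + z) mod 4 <> 0 /\ (y - z) mod 4 <> 0 /\
  (z + x) mod 4 <> 0 /\ (z - x) mod 4 <> 0.

Definition dist (P Q : point) : R :=
  let '(x1, y1, z1) := P in let '(x2, y2, z2) := Q in
  sqrt (IZR ((x1 - x2)^2 + (y1 - y2)^2 + (z1 - z2)^2)).

Definition adjG (P Q : point) : Prop := inV P /\ inV Q /\ dist P Q = sqrt 2%R.

(* sorted absolute values x' >= y' >= z' >= 0 *)
Definition xs (P : point) : Z :=
  let '(x, y, z) := P in Z.max (Z.abs x) (Z.max (Z.abs y) (Z.abs z)).
Definition zs (P : point) : Z :=
  let '(x, y, z) := P in Z.min (Z.abs x) (Z.min (Z.abs y) (Z.abs z)).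
Definition ys (P : point) : Z :=
  let '(x, y, z) := P in Z.abs x + Z.abs y + Z.abs z - xs P - zs P.

Definition a_fun (n : Z) : Z :=
  match n mod 4 with 1 => 1 | 3 => -1 | _ => 0 end.
Definition b_fun (n : Z) : Z :=
  match n mod 4 with 0 => 1 | 2 => -1 | _ => 0 end.

Definition s_val (P : point) : Z := a_fun (ys P) * b_fun (xs P).

Definition h' (P : point) : R :=
  (IZR (xs P) + IZR (ys P) / 2 - IZR (s_val P) / 2)%R.

(* correction term c(P); cases checked in the order of the paper *)
Definition c_val (P : point) : Z :=
  let '(x, y, z) := P in
  let ax := Z.abs x in let ay := Z.abs y in let az := Z.abs z in
  if (ay <=? ax) && (az <=? ay) then 0
  else if (ay <=? az) && (az <=? ax) then - Z.sgn z
  else if (ax <=? ay) && (az <=? ax) then - Z.sgn y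
  else if (az <=? ay) && (ax <=? az) then
    (if y * z <=? 0 then 0 else -2 * Z.sgn z)
  else if (ax <=? az) && (ay <=? ax) then -2 * Z.sgn z
  else (* |z| >= |y| >= |x| *)
    (if y * z <=? 0 then - Z.sgn z else -3 * Z.sgn y).

Definition h (P : point) : R := (h' P + IZR (c_val P))%R.

Definition Tvec (k : Z) : point :=
  if k =? 3 then (2, 2, 2) else if k =? 4 then (4, 0, 0) else (4, 4, 0).

Definition Tinv (k : Z) (P : point) : point :=
  let '(x, y, z) := P in let '(a, b, c) := Tvec k in (x - a, y - b, z - c).

Definition Qreg (k : Z) (P : point) : Prop :=
  let '(x, y, z) := P in
  if k =? 3 then 0 <= x + y /\ 0 <= y + z /\ 0 <= z + x
  else if k =? 4 then Z.abs y <= x /\ Z.abs z <= x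
  else Z.abs z <= y /\ y + Z.abs z <= x.

Definition inU (P : point) : Prop :=
  let '(x, y, z) := P in x >= y /\ y >= z /\ z >= 0.

(* On the cone U the correction c vanishes and the sorted coordinates are
   x >= y >= z, so h = x + y/2 - s/2 with |s| <= 1, and h >= 15 forces
   2x + y >= 29.  Neighbours in G differ from P by at most 1 in each
   coordinate.  If x - y >= 6, a unit box around P and around T_4^-1 P stays in
   the wedge Q_4; otherwise y >= x - 5 together with 2x + y >= 29 gives
   x + y, y + z, z + x >= 6 (z >= 0), which keeps both unit boxes in Q_3. *)
From Stdlib Require Import ZArith Reals Lra Lia.
Open Scope Z_scope.

Lemma a_fun_bound (n : Z) : -1 <= a_fun n <= 1.
Proof. unfold a_fun; destruct (n mod 4) as [|[[]|[]|]|]; simpl; lia. Qed.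

Lemma b_fun_bound (n : Z) : -1 <= b_fun n <= 1.
Proof. unfold b_fun; destruct (n mod 4) as [|[[]|[]|]|]; simpl; lia. Qed.

Lemma s_val_bound (P : point) : -1 <= s_val P <= 1.
Proof.
  unfold s_val.
  pose proof (a_fun_bound (ys P)); pose proof (b_fun_bound (xs P)); nia.
Qed.

Definition unit_box (P N : point) : Prop :=
  let '(x, y, z) := P in let '(u, v, w) := N in
  Z.abs (u - x) <= 1 /\ Z.abs (v - y) <= 1 /\ Z.abs (w - z) <= 1.

Lemma unit_box_refl (P : point) : unit_box P P.
Proof. destruct P as [[x y] z]; simpl; lia. Qed.

Lemma adjG_unit_box (P N : point) : adjG P N -> unit_box P N.
Proof.
  destruct P as [[x y] z], N as [[u v] w]; intros [_ [_ Hd]]; unfold dist in Hd.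
  apply sqrt_inj in Hd; [| apply IZR_le; nia | lra].
  change 2%R with (IZR 2) in Hd; apply eq_IZR in Hd.
  simpl; nia.
Qed.

Lemma unit_box_in_Qreg (k : Z) (P : point) :
  (forall N, unit_box P N -> Qreg k N /\ Qreg k (Tinv k N)) ->
  Qreg k P /\ Qreg k (Tinv k P) /\
  (forall N, adjG P N -> Qreg k N /\ Qreg k (Tinv k N)).
Proof.
  intros Hk; destruct (Hk P (unit_box_refl P)) as [HP HTP].
  split; [exact HP | split; [exact HTP |]].
  intros N HN; exact (Hk N (adjG_unit_box _ _ HN)).
Qed.

Lemma h_on_U (x y z : Z) : inU (x, y, z) ->
  h (x, y, z) = (IZR x + IZR y / 2 - IZR (s_val (x, y, z)) / 2)%R.
Proof.
  intros [Hxy [Hyz Hz]].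
  assert (Ex : xs (x, y, z) = x) by (unfold xs; lia).
  assert (Ez : zs (x, y, z) = z) by (unfold zs; lia).
  assert (Ey : ys (x, y, z) = y) by (unfold ys; rewrite Ex, Ez; lia).
  assert (Ec : c_val (x, y, z) = 0).
  { unfold c_val.
    replace (Z.abs y <=? Z.abs x) with true by (symmetry; apply Z.leb_le; lia).
    replace (Z.abs z <=? Z.abs y) with true by (symmetry; apply Z.leb_le; lia).
    reflexivity. }
  unfold h, h'; rewrite Ex, Ey, Ec; lra.
Qed.

Lemma h_ge_15_on_U (x y z : Z) : inU (x, y, z) -> (15 <= h (x, y, z))%R ->
  29 <= 2 * x + y.
Proof.
  intros HU Hh; rewrite (h_on_U x y z HU) in Hh.
  pose proof (s_val_bound (x, y, z)) as Hs.
  set (s := s_val (x, y, z)) in *.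
  assert (H30 : (IZR 30 <= IZR (2 * x + y - s))%R).
  { rewrite minus_IZR, plus_IZR, mult_IZR; simpl; lra. }
  apply le_IZR in H30; lia.
Qed.

Lemma unit_box_in_Q3 (x y z : Z) :
  6 <= x + y -> 6 <= y + z -> 6 <= z + x ->
  forall N, unit_box (x, y, z) N -> Qreg 3 N /\ Qreg 3 (Tinv 3 N).
Proof. intros Hxy Hyz Hzx [[u v] w]; simpl; lia. Qed.

Lemma unit_box_in_Q4 (x y z : Z) :
  0 <= z <= y -> 6 <= x - y ->
  forall N, unit_box (x, y, z) N -> Qreg 4 N /\ Qreg 4 (Tinv 4 N).
Proof. intros Hzy Hxy [[u v] w]; simpl; lia. Qed.

Theorem lemma2 (P : point) :
  inV P -> inU P -> (15 <= h P)%R ->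
  exists k : Z, (k = 3 \/ k = 4 \/ k = 6) /\
    Qreg k P /\ Qreg k (Tinv k P) /\
    (forall N : point, adjG P N -> Qreg k N /\ Qreg k (Tinv k N)).
Proof.
  destruct P as [[x y] z]; intros _ HU Hh.
  pose proof (h_ge_15_on_U x y z HU Hh) as H29.
  destruct HU as [Hxy [Hyz Hz]].
  destruct (Z_le_gt_dec 6 (x - y)) as [Hfar | Hnear].
  - exists 4; split; [lia|]; apply unit_box_in_Qreg, unit_box_in_Q4; lia.
  - exists 3; split; [lia|]; apply unit_box_in_Qreg, unit_box_in_Q3; lia.
Qed.
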